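(* Let $\delta\in(0,1/3)$. For $\tau>n^{-\delta}$, $$ \int_{-\pi}^{\pi} e^{-in(\theta-\tau\sin(\theta))}\, e^{-2n\tau\sin^2(\theta/2)}\,\frac{d\theta}{2\pi} \;=\;\frac{e^{n(\ln(\tau)+1-\tau)}}{\sqrt{2\pi n}}\,\bigl(1+o(1)\bigr)+o\!\left(\frac1n\right), $$ as $n\to\infty$. *)

From Stdlib Require Import Reals.
From Coquelicot Require Import Coquelicot.
Open Scope R_scope.

Definition phase (n : nat) (tau theta : R) : R := INR n * (theta - tau * sin theta).
Definition damp (n : nat) (tau theta : R) : R :=
  exp (- (2 * INR n * tau * (sin (theta / 2)) ^ 2)).

(* Complex-valued integrand e^{-i n(θ - τ sin θ)} e^{-2nτ sin^2(θ/2)},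
   written as (real part, imaginary part), using e^{-ix} = cos x - i sin x. *)
Definition integrand (n : nat) (tau theta : R) : C :=
  (cos (phase n tau theta) * damp n tau theta,
   - sin (phase n tau theta) * damp n tau theta).

Definition CRInt (f : R -> C) (a b : R) : C :=
  (RInt (fun t => Re (f t)) a b, RInt (fun t => Im (f t)) a b).

Definition LHS (n : nat) (tau : R) : C :=
  Cmult (RtoC (/ (2 * PI))) (CRInt (integrand n tau) (- PI) PI).

Definition main_term (n : nat) (tau : R) : R :=
  exp (INR n * (ln tau + 1 - tau)) / sqrt (2 * PI * INR n).

From Stdlib Require Import Reals Factorial Lra Lia.
From Coquelicot Require Import Coquelicot.
Open Scope R_scope.

(* Since cos θ = 1 - 2 sin²(θ/2), the integrand is e^{-nτ} exp(nτ e^{iθ}) e^{-inθ}, whose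
   imaginary part is odd in θ.  Integrating by parts, F_m(x) = ∫ Re(exp(x e^{it}) e^{-imt}) dt
   satisfies x F_{m-1}(x) = m F_m(x); in particular F_{-1} = 0, so F_0 is constant, equal to
   2π, and F_n(x) = 2π x^n / n!.  Hence the integral is exactly the Poisson weight
   e^{-nτ} (nτ)^n / n!, and Stirling's formula (with the constant obtained from Wallis'
   integrals) turns it into main_term · (1 + o(1)) uniformly in τ > 0.  So the o(1/n) term is 0,
   and the hypothesis τ > n^{-δ} is only used through τ > 0. *)

Lemma continuous_of_ex_derive (f : R -> R) t : ex_derive f t -> continuous f t.
Proof. exact (ex_derive_continuous (K := R_AbsRing) (V := R_NormedModule) f t). Qed.

Lemma ex_RInt_of_ex_derive (f : R -> R) a b :
  (forall t, ex_derive f t) -> ex_RInt f a b.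
Proof.
  intro Df. apply (ex_RInt_continuous (V := R_CompleteNormedModule)).
  intros t _. exact (continuous_of_ex_derive f t (Df t)).
Qed.

Lemma RInt_is_derive (f df : R -> R) a b :
  (forall t, is_derive f t (df t)) -> (forall t, ex_derive df t) ->
  RInt df a b = f b - f a.
Proof.
  intros Df Ddf.
  apply (is_RInt_unique (V := R_CompleteNormedModule)), (is_RInt_derive f df).
  - intros t _. exact (Df t).
  - intros t _. exact (continuous_of_ex_derive df t (Ddf t)).
Qed.

Lemma RInt_odd (f : R -> R) a :
  (forall t, f (- t) = - f t) -> (forall t, ex_derive f t) -> RInt f (- a) a = 0.
Proof.
  intros Hodd Df.
  assert (Hsym := RInt_comp_lin f (-1) 0 (- a) a).
  replace (-1 * - a + 0) with a in Hsym by ring.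
  replace (-1 * a + 0) with (- a) in Hsym by ring.
  specialize (Hsym (ex_RInt_of_ex_derive f a (- a) Df)).
  rewrite (RInt_ext _ f) in Hsym.
  2: { intros t _. unfold scal; simpl; unfold mult; simpl.
       replace (-1 * t + 0) with (- t) by ring. rewrite Hodd. ring. }
  rewrite <- (opp_RInt_swap (V := R_CompleteNormedModule) f (- a) a) in Hsym
    by (apply ex_RInt_of_ex_derive; exact Df).
  unfold opp in Hsym; simpl in Hsym. lra.
Qed.

(* Real and imaginary parts of [exp (x e^{it}) e^{-imt}]. *)
Definition expcis_re (m x t : R) : R := exp (x * cos t) * cos (x * sin t - m * t).
Definition expcis_im (m x t : R) : R := exp (x * cos t) * sin (x * sin t - m * t).

Lemma ex_derive_expcis_re m x t : ex_derive (expcis_re m x) t.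
Proof. unfold expcis_re. auto_derive. easy. Qed.

Lemma ex_RInt_expcis_re m x a b : ex_RInt (expcis_re m x) a b.
Proof. apply ex_RInt_of_ex_derive. intro t. apply ex_derive_expcis_re. Qed.

Lemma is_derive_expcis_im m x t :
  is_derive (expcis_im m x) t (x * expcis_re (m - 1) x t - m * expcis_re m x t).
Proof.
  unfold expcis_im, expcis_re. auto_derive; [easy|].
  replace (x * sin t - (m - 1) * t) with ((x * sin t - m * t) + t) by ring.
  rewrite (cos_plus (x * sin t - m * t) t). unfold Rminus. ring.
Qed.

Lemma RInt_expcis_re_pred m x : sin (m * PI) = 0 ->
  x * RInt (expcis_re (m - 1) x) (- PI) PI = m * RInt (expcis_re m x) (- PI) PI.
Proof.
  intro Hm.
  assert (Hfund := RInt_is_derive (expcis_im m x)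
    (fun t => x * expcis_re (m - 1) x t - m * expcis_re m x t) (- PI) PI
    (is_derive_expcis_im m x)
    ltac:(intro t; unfold expcis_re; auto_derive; easy)).
  rewrite (RInt_minus (V := R_CompleteNormedModule)) in Hfund
    by (apply (ex_RInt_scal (V := R_CompleteNormedModule)), ex_RInt_expcis_re).
  rewrite !(RInt_scal (V := R_CompleteNormedModule)) in Hfund by apply ex_RInt_expcis_re.
  unfold minus, plus, opp, scal in Hfund; simpl in Hfund; unfold mult in Hfund; simpl in Hfund.
  unfold expcis_im in Hfund.
  rewrite sin_neg, sin_PI, cos_neg, cos_PI in Hfund.
  replace (x * 0 - m * PI) with (- (m * PI)) in Hfund by ring.
  replace (x * - 0 - m * - PI) with (m * PI) in Hfund by ring.
  rewrite sin_neg, Hm in Hfund. lra.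
Qed.

Lemma is_derive_expcis_re_0_param x t :
  is_derive (fun y => expcis_re 0 y t) x (expcis_re (-1) x t).
Proof.
  unfold expcis_re. auto_derive; [easy|].
  replace (x * sin t - -1 * t) with ((x * sin t - 0 * t) + t) by ring.
  rewrite (cos_plus (x * sin t - 0 * t) t). unfold Rminus. ring.
Qed.

Lemma continuity_2d_expcis_re m x t : continuity_2d_pt (expcis_re m) x t.
Proof.
  unfold expcis_re. apply continuity_2d_pt_mult.
  - apply (continuity_1d_2d_pt_comp exp (fun u v => u * cos v)).
    + apply derivable_continuous_pt, derivable_pt_exp.
    + apply continuity_2d_pt_mult; [apply continuity_2d_pt_id1|].
      apply (continuity_1d_2d_pt_comp cos (fun u v => v)).
      * apply continuity_cos.
      * apply continuity_2d_pt_id2.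
  - apply (continuity_1d_2d_pt_comp cos (fun u v => u * sin v - m * v)).
    + apply continuity_cos.
    + apply continuity_2d_pt_minus; apply continuity_2d_pt_mult.
      * apply continuity_2d_pt_id1.
      * apply (continuity_1d_2d_pt_comp sin (fun u v => v)).
        -- apply continuity_sin.
        -- apply continuity_2d_pt_id2.
      * apply continuity_2d_pt_const.
      * apply continuity_2d_pt_id2.
Qed.

Lemma is_derive_RInt_expcis_re_0 x :
  is_derive (fun y => RInt (expcis_re 0 y) (- PI) PI) x
    (RInt (expcis_re (-1) x) (- PI) PI).
Proof.
  rewrite <- (RInt_ext (fun t => Derive (fun y => expcis_re 0 y t) x))
    by (intros t _; apply is_derive_unique, is_derive_expcis_re_0_param).
  apply (is_derive_RInt_param (fun y t => expcis_re 0 y t)).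
  - apply filter_forall. intros y t _. eexists. apply is_derive_expcis_re_0_param.
  - intros t _. apply continuity_2d_pt_ext with (expcis_re (-1)).
    + intros y s. symmetry. apply is_derive_unique, is_derive_expcis_re_0_param.
    + apply continuity_2d_expcis_re.
  - apply filter_forall. intro y. apply ex_RInt_expcis_re.
Qed.

Lemma RInt_expcis_re_m1 x : RInt (expcis_re (-1) x) (- PI) PI = 0.
Proof.
  destruct (Req_dec x 0) as [-> | Hx].
  - rewrite (RInt_ext _ cos).
    2: { intros t _. unfold expcis_re.
         rewrite !Rmult_0_l, exp_0, Rmult_1_l. f_equal. ring. }
    rewrite (RInt_is_derive sin cos)
      by (intro t; first [apply is_derive_sin | auto_derive; easy]).
    rewrite sin_neg, sin_PI. lra.
  - assert (H := RInt_expcis_re_pred 0 x ltac:(rewrite Rmult_0_l; apply sin_0)).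
    replace (0 - 1) with (-1) in H by ring.
    rewrite Rmult_0_l in H. apply Rmult_integral in H. tauto.
Qed.

Lemma RInt_expcis_re_0 x : RInt (expcis_re 0 x) (- PI) PI = 2 * PI.
Proof.
  assert (Hconst : forall y z, y <= z ->
    RInt (expcis_re 0 y) (- PI) PI = RInt (expcis_re 0 z) (- PI) PI).
  { intros y z Hyz. destruct (Req_dec y z) as [-> | Hne]; [reflexivity|].
    apply (eq_is_derive (V := R_NormedModule) (fun y => RInt (expcis_re 0 y) (- PI) PI));
      [|lra].
    intros s _. assert (D := is_derive_RInt_expcis_re_0 s).
    rewrite RInt_expcis_re_m1 in D. exact D. }
  assert (H0 : RInt (expcis_re 0 0) (- PI) PI = 2 * PI).
  { rewrite (RInt_ext _ (fun _ => 1)), RInt_const.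
    - unfold scal; simpl; unfold mult; simpl. ring.
    - intros t _. unfold expcis_re.
      rewrite !Rmult_0_l, exp_0, Rminus_0_r, cos_0. lra. }
  rewrite <- H0. destruct (Rle_dec x 0).
  - apply Hconst; lra.
  - symmetry. apply Hconst; lra.
Qed.

Lemma RInt_expcis_re_nat n x :
  RInt (expcis_re (INR n) x) (- PI) PI = 2 * PI * x ^ n / INR (fact n).
Proof.
  induction n as [|n IH].
  - simpl. rewrite RInt_expcis_re_0. field.
  - assert (H := RInt_expcis_re_pred (INR (S n)) x).
    replace (INR (S n) - 1) with (INR n) in H by (rewrite S_INR; ring).
    rewrite IH in H.
    assert (HS : 0 < INR (S n)) by (apply lt_0_INR; lia).
    assert (Hf := INR_fact_neq_0 n).
    apply (Rmult_eq_reg_l (INR (S n))); [|lra].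
    rewrite <- H.
    + rewrite fact_simpl, mult_INR. simpl pow. field. lra.
    + apply sin_eq_0_1. exists (Z.of_nat (S n)). rewrite INR_IZR_INZ. reflexivity.
Qed.

Lemma Re_integrand n tau t :
  Re (integrand n tau t) = exp (- (INR n * tau)) * expcis_re (INR n) (INR n * tau) t.
Proof.
  unfold integrand, expcis_re, phase, damp, Re; cbn [fst].
  rewrite <- Rmult_assoc, <- exp_plus.
  replace (INR n * tau * sin t - INR n * t) with (- (INR n * (t - tau * sin t))) by ring.
  rewrite cos_neg.
  replace (cos t) with (1 - 2 * sin (t / 2) ^ 2)
    by (simpl; rewrite Rmult_1_r, <- Rmult_assoc, <- cos_2a_sin; f_equal; field).
  rewrite Rmult_comm. do 2 f_equal. lra.
Qed.

Lemma Im_integrand_odd n tau t : Im (integrand n tau (- t)) = - Im (integrand n tau t).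
Proof.
  unfold integrand, phase, damp, Im; cbn [snd].
  replace (- t / 2) with (- (t / 2)) by field.
  rewrite !sin_neg.
  replace (INR n * (- t - tau * - sin t)) with (- (INR n * (t - tau * sin t))) by ring.
  rewrite sin_neg, <- Rsqr_pow2, <- Rsqr_neg, Rsqr_pow2. ring.
Qed.

Lemma LHS_poisson n tau :
  LHS n tau = RtoC (exp (- (INR n * tau)) * (INR n * tau) ^ n / INR (fact n)).
Proof.
  unfold LHS, CRInt.
  rewrite (RInt_odd _ PI (Im_integrand_odd n tau))
    by (intro t; unfold integrand, phase, damp, Im; simpl; auto_derive; easy).
  rewrite (RInt_ext _ (fun t => scal (exp (- (INR n * tau))) (expcis_re (INR n) (INR n * tau) t)))
    by (intros t _; apply Re_integrand).
  rewrite (RInt_scal (V := R_CompleteNormedModule)) by apply ex_RInt_expcis_re.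
  rewrite RInt_expcis_re_nat.
  unfold scal, Cmult, RtoC; simpl; unfold mult; simpl.
  assert (Hpi := PI_neq0). assert (Hf := INR_fact_neq_0 n).
  f_equal; field; tauto.
Qed.

Lemma le_of_is_derive_nonneg (f df : R -> R) a b : a <= b ->
  (forall y, a <= y <= b -> is_derive f y (df y)) ->
  (forall y, a <= y <= b -> 0 <= df y) -> f a <= f b.
Proof.
  intros Hab Df Hpos.
  destruct (MVT_gen f a b df) as [c [Hc Hmvt]];
    rewrite ?Rmin_left, ?Rmax_right in * by lra.
  - intros y Hy. apply Df. lra.
  - intros y Hy. apply continuity_pt_filterlim, continuous_of_ex_derive.
    eexists. apply Df. lra.
  - assert (0 <= df c * (b - a)) by (apply Rmult_le_pos; [apply Hpos|]; lra).
    lra.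
Qed.

Lemma ln_ge_pade z : 1 <= z -> 2 * (z - 1) / (z + 1) <= ln z.
Proof.
  intro Hz.
  assert (H := le_of_is_derive_nonneg (fun y => ln y - 2 * (y - 1) / (y + 1))
                 (fun y => (y - 1) ^ 2 / (y * (y + 1) ^ 2)) 1 z Hz).
  cbv beta in H. rewrite ln_1 in H.
  enough (0 - 2 * (1 - 1) / (1 + 1) <= ln z - 2 * (z - 1) / (z + 1)) by lra.
  apply H.
  - intros y Hy. auto_derive; [lra|]. field. lra.
  - intros y Hy. apply Rdiv_le_0_compat; nra.
Qed.

Lemma ln_1p_le_taylor3 h : 0 <= h -> ln (1 + h) <= h - h ^ 2 / 2 + h ^ 3 / 3.
Proof.
  intro Hh.
  assert (H := le_of_is_derive_nonneg (fun y => y - y ^ 2 / 2 + y ^ 3 / 3 - ln (1 + y))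
                 (fun y => y ^ 3 / (1 + y)) 0 h Hh).
  cbv beta in H. rewrite Rplus_0_r, ln_1 in H.
  enough (0 - 0 ^ 2 / 2 + 0 ^ 3 / 3 - 0 <= h - h ^ 2 / 2 + h ^ 3 / 3 - ln (1 + h))
    by (simpl in *; lra).
  apply H.
  - intros y Hy. auto_derive; [lra|]. field. lra.
  - intros y Hy. apply Rdiv_le_0_compat; [apply pow_le|]; lra.
Qed.

Definition stirling_gap (n : nat) : R :=
  ln (INR (fact n)) + INR n - (INR n + / 2) * ln (INR n).

Lemma stirling_gap_sub_S n : (1 <= n)%nat ->
  stirling_gap n - stirling_gap (S n) = (INR n + / 2) * ln (1 + / INR n) - 1.
Proof.
  intro Hn. assert (HN : 1 <= INR n) by (apply (le_INR 1); lia).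
  unfold stirling_gap. rewrite fact_simpl, mult_INR, S_INR.
  replace (1 + / INR n) with ((INR n + 1) / INR n) by (field; lra).
  rewrite ln_mult, ln_div by (try apply INR_fact_lt_0; lra). ring.
Qed.

Lemma stirling_gap_step n : (1 <= n)%nat ->
  0 <= stirling_gap n - stirling_gap (S n) <= / (2 * INR n) - / (2 * INR (S n)).
Proof.
  intro Hn. assert (HN : 1 <= INR n) by (apply (le_INR 1); lia).
  rewrite stirling_gap_sub_S, S_INR by exact Hn.
  set (N := INR n) in *. split.
  - assert (H := ln_ge_pade (1 + / N)).
    replace (2 * (1 + / N - 1) / (1 + / N + 1)) with (2 / (2 * N + 1)) in H by (field; lra).
    assert (0 < / N) by (apply Rinv_0_lt_compat; lra).
    assert ((N + / 2) * (2 / (2 * N + 1)) = 1) by (field; lra).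
    assert (Hpade : 2 / (2 * N + 1) <= ln (1 + / N)) by (apply H; lra).
    apply Rmult_le_compat_l with (r := N + / 2) in Hpade; lra.
  - assert (H := ln_1p_le_taylor3 (/ N)).
    assert (0 < / N) by (apply Rinv_0_lt_compat; lra).
    apply Rmult_le_compat_l with (r := N + / 2) in H; [|lra|lra].
    assert (E : / (2 * N) - / (2 * (N + 1)) -
                ((N + / 2) * (/ N - (/ N) ^ 2 / 2 + (/ N) ^ 3 / 3) - 1)
                = (5 * N ^ 2 - 3 * N - 2) / (12 * N ^ 3 * (N + 1))) by (field; lra).
    assert (0 <= (5 * N ^ 2 - 3 * N - 2) / (12 * N ^ 3 * (N + 1))).
    { apply Rdiv_le_0_compat; [nra|]. assert (0 < N ^ 3) by (apply pow_lt; lra). nra. }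
    lra.
Qed.

Lemma stirling_gap_ge n : (1 <= n)%nat -> 1 / 2 <= stirling_gap n.
Proof.
  intro Hn.
  enough (1 / 2 + / (2 * INR n) <= stirling_gap n).
  { assert (0 < / (2 * INR n)) by (apply Rinv_0_lt_compat, Rmult_lt_0_compat;
      [lra | apply lt_0_INR; lia]). lra. }
  induction Hn as [|n Hn IH].
  - unfold stirling_gap. simpl. rewrite ln_1. lra.
  - assert (H := stirling_gap_step n Hn). lra.
Qed.

Lemma ex_finite_lim_stirling_gap : exists l : R, is_lim_seq stirling_gap l.
Proof.
  destruct (decreasing_cv (fun k => stirling_gap (S k))) as [l Hl].
  - intro k. assert (H := stirling_gap_step (S k) ltac:(lia)). lra.
  - exists (- (1 / 2)). intros x [k ->]. unfold opp_seq.
    assert (H := stirling_gap_ge (S k) ltac:(lia)). lra.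
  - exists l. apply is_lim_seq_incr_1, is_lim_seq_Reals, Hl.
Qed.

Definition wallis_integral (k : nat) : R := RInt (fun t => sin t ^ k) 0 (PI / 2).

Lemma ex_RInt_sin_pow k a b : ex_RInt (fun t => sin t ^ k) a b.
Proof. apply ex_RInt_of_ex_derive. intro t. auto_derive. easy. Qed.

Lemma wallis_integral_SS k :
  (INR k + 2) * wallis_integral (S (S k)) = (INR k + 1) * wallis_integral k.
Proof.
  assert (D : forall t, is_derive (fun t => - cos t * sin t ^ S k) t
                ((INR k + 2) * sin t ^ S (S k) - (INR k + 1) * sin t ^ k)).
  { intro t. auto_derive; [easy|].
    change (match k with 0%nat => 1 | S _ => INR k + 1 end) with (INR (S k)).
    rewrite S_INR. simpl pow.
    assert (Hc : cos t * cos t = 1 - sin t * sin t)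
      by (rewrite <- (sin2_cos2 t); unfold Rsqr; ring).
    apply Rminus_diag_uniq.
    match goal with |- ?a - ?b = 0 => replace (a - b) with
      ((INR k + 1) * sin t ^ k * (1 - sin t * sin t - cos t * cos t))
      by (unfold Rminus; ring) end.
    rewrite Hc. ring. }
  assert (Hfund := RInt_is_derive _ _ 0 (PI / 2) D
                     ltac:(intro t; auto_derive; easy)).
  rewrite (RInt_minus (V := R_CompleteNormedModule)) in Hfund
    by (apply (ex_RInt_scal (V := R_CompleteNormedModule)), ex_RInt_sin_pow).
  rewrite !(RInt_scal (V := R_CompleteNormedModule)) in Hfund by apply ex_RInt_sin_pow.
  fold (wallis_integral (S (S k))) (wallis_integral k) in Hfund.
  unfold minus, plus, opp, scal in Hfund; simpl in Hfund; unfold mult in Hfund; simpl in Hfund.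
  rewrite cos_PI2, cos_0, sin_0 in Hfund. lra.
Qed.

Lemma wallis_integral_0 : wallis_integral 0 = PI / 2.
Proof.
  unfold wallis_integral. simpl pow. rewrite RInt_const.
  unfold scal; simpl; unfold mult; simpl. ring.
Qed.

Lemma wallis_integral_1 : wallis_integral 1 = 1.
Proof.
  unfold wallis_integral.
  rewrite (RInt_is_derive (fun t => - cos t)).
  - rewrite cos_PI2, cos_0. ring.
  - intro t. auto_derive; [easy|]. ring.
  - intro t. auto_derive. easy.
Qed.

Lemma wallis_integral_S_le k : wallis_integral (S k) <= wallis_integral k.
Proof.
  assert (Hpi := PI_RGT_0).
  apply RInt_le; [lra | apply ex_RInt_sin_pow | apply ex_RInt_sin_pow |].
  intros t Ht. simpl pow.
  assert (0 <= sin t) by (apply sin_ge_0; lra).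
  assert (sin t <= 1) by apply SIN_bound.
  assert (0 <= sin t ^ k) by (apply pow_le; lra).
  nra.
Qed.

Definition central_binom_ratio (n : nat) : R :=
  INR (fact (2 * n)) / (4 ^ n * INR (fact n) ^ 2).

Lemma central_binom_ratio_pos n : 0 < central_binom_ratio n.
Proof.
  apply Rdiv_lt_0_compat; [apply INR_fact_lt_0|].
  apply Rmult_lt_0_compat; apply pow_lt; [lra | apply INR_fact_lt_0].
Qed.

Lemma central_binom_ratio_S n :
  central_binom_ratio (S n) = central_binom_ratio n * (2 * INR n + 1) / (2 * INR n + 2).
Proof.
  unfold central_binom_ratio.
  replace (2 * S n)%nat with (S (S (2 * n))) by lia.
  rewrite !fact_simpl, !mult_INR, !S_INR, mult_INR. simpl INR. simpl pow.
  assert (0 <= INR n) by apply pos_INR.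
  assert (Hf := INR_fact_neq_0 n).
  assert (0 < 4 ^ n) by (apply pow_lt; lra).
  field. repeat split; lra.
Qed.

Lemma wallis_integral_closed n :
  wallis_integral (2 * n) = PI / 2 * central_binom_ratio n /\
  wallis_integral (S (2 * n)) = / ((2 * INR n + 1) * central_binom_ratio n).
Proof.
  induction n as [|n [IHeven IHodd]].
  - simpl. rewrite wallis_integral_0, wallis_integral_1.
    unfold central_binom_ratio. simpl. split; field.
  - assert (Hc := central_binom_ratio_pos n). assert (0 <= INR n) by apply pos_INR.
    replace (2 * S n)%nat with (S (S (2 * n))) by lia.
    assert (Reven := wallis_integral_SS (2 * n)).
    assert (Rodd := wallis_integral_SS (S (2 * n))).
    rewrite mult_INR in Reven. rewrite S_INR, mult_INR in Rodd. simpl INR in Reven, Rodd.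
    rewrite central_binom_ratio_S, S_INR. split.
    + apply (Rmult_eq_reg_l (2 * INR n + 2)); [|lra].
      replace (1 + 1) with 2 in Reven by ring.
      rewrite Reven, IHeven. field. lra.
    + apply (Rmult_eq_reg_l (2 * INR n + 3)); [|lra].
      replace (2 * INR n + 3) with ((1 + 1) * INR n + 1 + 2) by ring.
      rewrite Rodd, IHodd. field. repeat split; lra.
Qed.

Lemma wallis_ineq n :
  2 / PI <= (2 * INR n + 1) * central_binom_ratio n ^ 2 <=
  2 / PI * (1 + / (2 * INR n + 1)).
Proof.
  destruct (wallis_integral_closed n) as [Heven Hodd].
  destruct (wallis_integral_closed (S n)) as [Heven' _].
  assert (D1 := wallis_integral_S_le (2 * n)).
  assert (D2 := wallis_integral_S_le (S (2 * n))).
  replace (S (S (2 * n))) with (2 * S n)%nat in D2 by lia.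
  rewrite Heven, Hodd in D1. rewrite Hodd, Heven', central_binom_ratio_S in D2.
  assert (Hc := central_binom_ratio_pos n). assert (0 <= INR n) by apply pos_INR.
  assert (Hpi := PI_RGT_0).
  set (c := central_binom_ratio n) in *. set (N := INR n) in *.
  assert (Hx : 0 < (2 * N + 1) * c) by nra.
  apply Rmult_le_compat_l with (r := 2 / PI * ((2 * N + 1) * c)) in D1, D2;
    try (apply Rlt_le, Rmult_lt_0_compat; [apply Rdiv_lt_0_compat|]; lra).
  replace (2 / PI * ((2 * N + 1) * c) * / ((2 * N + 1) * c)) with (2 / PI)
    in D1, D2 by (field; lra).
  split.
  - replace ((2 * N + 1) * c ^ 2) with (2 / PI * ((2 * N + 1) * c) * (PI / 2 * c))
      by (field; lra). exact D1.
  - replace ((2 * N + 1) * c ^ 2) with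
      (2 / PI * ((2 * N + 1) * c) * (PI / 2 * (c * (2 * N + 1) / (2 * N + 2)))
       * (1 + / (2 * N + 1))) by (field; lra).
    apply Rmult_le_compat_r; [|exact D2].
    assert (0 < / (2 * N + 1)) by (apply Rinv_0_lt_compat; lra). lra.
Qed.

Lemma is_lim_seq_inv_affine a b : 1 <= a -> 0 <= b ->
  is_lim_seq (fun n => / (a * INR n + b)) 0.
Proof.
  intros Ha Hb.
  apply (is_lim_seq_inv _ p_infty); [|discriminate].
  apply (is_lim_seq_le_p_loc INR); [|exact is_lim_seq_INR].
  exists 0%nat. intros n _. assert (0 <= INR n) by apply pos_INR. nra.
Qed.

Lemma is_lim_seq_wallis :
  is_lim_seq (fun n => (2 * INR n + 1) * central_binom_ratio n ^ 2) (2 / PI).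
Proof.
  apply is_lim_seq_le_le with (u := fun _ => 2 / PI)
    (w := fun n => 2 / PI * (1 + / (2 * INR n + 1))).
  - apply wallis_ineq.
  - apply is_lim_seq_const.
  - replace (Finite (2 / PI)) with (Rbar_mult (2 / PI) (Rbar_plus 1 0))
      by (simpl; f_equal; ring).
    apply is_lim_seq_scal_l, is_lim_seq_plus'.
    + apply is_lim_seq_const.
    + apply is_lim_seq_inv_affine; lra.
Qed.

Lemma stirling_gap_wallis n : (1 <= n)%nat ->
  2 * stirling_gap (2 * n) - 4 * stirling_gap n + 2 * ln 2 =
  ln ((2 * INR n + 1) * central_binom_ratio n ^ 2) - ln (1 + / (2 * INR n)).
Proof.
  intro Hn. assert (HN : 1 <= INR n) by (apply (le_INR 1); lia).
  assert (Hf := INR_fact_lt_0 n). assert (Hf2 := INR_fact_lt_0 (2 * n)).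
  assert (Hc := central_binom_ratio_pos n).
  assert (Lc : ln (central_binom_ratio n) =
               ln (INR (fact (2 * n))) - INR n * (2 * ln 2) - 2 * ln (INR (fact n))).
  { unfold central_binom_ratio.
    rewrite ln_div, ln_mult, !ln_pow by (try apply Rmult_lt_0_compat; try apply pow_lt; lra).
    replace 4 with (2 * 2) by ring. rewrite ln_mult by lra. simpl INR. ring. }
  assert (L2n : ln (2 * INR n + 1) = ln 2 + ln (INR n) + ln (1 + / (2 * INR n))).
  { rewrite <- !ln_mult by (try apply Rmult_lt_0_compat; try apply Rinv_0_lt_compat;
                            try apply Rplus_lt_0_compat; try apply Rinv_0_lt_compat; lra).
    f_equal. field. lra. }
  unfold stirling_gap.
  rewrite ln_mult, ln_pow, Lc, L2n by (try apply pow_lt; lra).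
  replace (INR (2 * n)) with (2 * INR n) by (rewrite mult_INR; simpl; ring).
  rewrite ln_mult by lra. change (INR 2) with (1 + 1). field.
Qed.

Theorem stirling : is_lim_seq stirling_gap (ln (2 * PI) / 2).
Proof.
  destruct ex_finite_lim_stirling_gap as [l Hl].
  assert (Hpi := PI_RGT_0).
  assert (Hcomb : is_lim_seq
            (fun n => 2 * stirling_gap (2 * n) - 4 * stirling_gap n + 2 * ln 2)
            (2 * l - 4 * l + 2 * ln 2)).
  { apply is_lim_seq_plus'; [apply is_lim_seq_minus'|apply is_lim_seq_const];
      apply is_lim_seq_mult'; try apply is_lim_seq_const; [|exact Hl].
    apply (is_lim_seq_subseq stirling_gap l (fun n => 2 * n)%nat); [|exact Hl].
    apply eventually_subseq. intro n. lia. }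
  assert (Hwallis : is_lim_seq
            (fun n => 2 * stirling_gap (2 * n) - 4 * stirling_gap n + 2 * ln 2)
            (ln (2 / PI) - ln (1 + 0))).
  { apply is_lim_seq_ext_loc with
      (fun n => ln ((2 * INR n + 1) * central_binom_ratio n ^ 2) - ln (1 + / (2 * INR n))).
    - exists 1%nat. intros n Hn. symmetry. apply stirling_gap_wallis, Hn.
    - apply is_lim_seq_minus'; apply is_lim_seq_continuous.
      + apply continuity_pt_filterlim, continuous_of_ex_derive.
        auto_derive. apply Rdiv_lt_0_compat; lra.
      + exact is_lim_seq_wallis.
      + apply continuity_pt_filterlim, continuous_of_ex_derive. auto_derive. lra.
      + apply is_lim_seq_plus'; [apply is_lim_seq_const|].
        apply is_lim_seq_ext with (fun n => / (2 * INR n + 0)).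
        * intro n. rewrite Rplus_0_r. reflexivity.
        * apply is_lim_seq_inv_affine; lra. }
  assert (E := is_lim_seq_unique _ _ Hcomb).
  rewrite (is_lim_seq_unique _ _ Hwallis) in E. injection E as E.
  rewrite Rplus_0_r, ln_1, ln_div in E by lra.
  rewrite ln_mult by lra. replace ((ln 2 + ln PI) / 2) with l by lra. exact Hl.
Qed.

Lemma poisson_weight_main_term n tau : (1 <= n)%nat -> 0 < tau ->
  exp (- (INR n * tau)) * (INR n * tau) ^ n / INR (fact n) =
  main_term n tau * exp (ln (2 * PI) / 2 - stirling_gap n).
Proof.
  intros Hn Htau. assert (HN : 1 <= INR n) by (apply (le_INR 1); lia).
  assert (Hpi := PI_RGT_0). assert (Hf := INR_fact_lt_0 n).
  assert (Epow : (INR n * tau) ^ n = exp (INR n * (ln (INR n) + ln tau))).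
  { rewrite <- ln_mult, <- Rpower_pow by nra. reflexivity. }
  assert (Efact : INR (fact n) = exp (ln (INR (fact n)))) by (rewrite exp_ln; lra).
  assert (Esqrt : sqrt (2 * PI * INR n) = exp (/ 2 * (ln (2 * PI) + ln (INR n)))).
  { rewrite <- ln_mult, <- Rpower_sqrt by nra. reflexivity. }
  unfold main_term, stirling_gap. rewrite Epow, Esqrt, Efact at 1.
  unfold Rdiv. rewrite <- !exp_Ropp, <- !exp_plus. f_equal. ring.
Qed.

Lemma is_lim_seq_stirling_ratio :
  is_lim_seq (fun n => exp (ln (2 * PI) / 2 - stirling_gap n)) 1.
Proof.
  assert (Hc : continuity_pt (fun y => exp (ln (2 * PI) / 2 - y)) (ln (2 * PI) / 2)).
  { apply continuity_pt_filterlim.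
    apply (continuous_of_ex_derive (fun y => exp (ln (2 * PI) / 2 - y))).
    auto_derive. easy. }
  assert (H := is_lim_seq_continuous _ _ _ Hc stirling).
  cbv beta in H. rewrite Rminus_eq_0, exp_0 in H. exact H.
Qed.

Theorem lemma3 (delta : R) (Hdelta : 0 < delta < 1 / 3) :
  forall eps : R, 0 < eps ->
  exists N : nat, forall (n : nat) (tau : R),
    (N <= n)%nat -> Rpower (INR n) (- delta) < tau ->
    exists a b : C,
      Cmod a <= eps /\ Cmod b <= eps / INR n /\
      LHS n tau = Cplus (Cmult (RtoC (main_term n tau)) (Cplus (RtoC 1) a)) b.
Proof.
  intros eps Heps.
  assert (Hratio := is_lim_seq_stirling_ratio).
  apply is_lim_seq_spec in Hratio. destruct (Hratio (mkposreal eps Heps)) as [N HN].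
  exists (S N). intros n tau Hn Htau.
  assert (Htau_pos : 0 < tau) by (eapply Rlt_trans; [apply exp_pos | exact Htau]).
  exists (RtoC (exp (ln (2 * PI) / 2 - stirling_gap n) - 1)), (RtoC 0). repeat split.
  - rewrite Cmod_R. apply Rlt_le, (HN n). lia.
  - rewrite Cmod_R, Rabs_R0. apply Rlt_le, Rdiv_lt_0_compat; [lra | apply lt_0_INR; lia].
  - rewrite LHS_poisson, poisson_weight_main_term by (lia || lra).
    apply injective_projections; simpl; ring.
Qed.
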